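(* Let $T$ be a c.n.u. contraction on $H$. For $a\in A_T^{\perp_s}$ write $a=(x_0,Tx_0)+(a_+,0)+(0,a_-)$ with $x_0\in\mathbb{K}$, $a_+\in\mathbb{K}^\perp$, $a_-\in\mathbb{K}_*^\perp$ (this decomposition exists and is unique since $A_T^{\perp_s}=A_T\oplus_\perp Q\oplus_\perp Q_*$), and set $\Gamma_+a=a_+$, $\Gamma_-a=a_-$. Then $(\mathbb{K}^\perp,\mathbb{K}_*^\perp,\Gamma_+,\Gamma_-)$ is a boundary quadruple for $A_T^{\perp_s}$.
   Context: $H$ is an infinite-dimensional separable complex Hilbert space. A c.n.u. contraction is $T\in\mathbb{B}(H)$ with $\|T\|\le1$ having no nonzero invariant subspace on which it is unitary. $\mathbb{K}=\ker(I-T^*T)$, $\mathbb{K}_*=\ker(I-TT^* )$. $\mathbb{H}=H\oplus_\perp H$ carries the strong symplectic structure $[(x_1,x_2),(y_1,y_2)]=i(x_1,y_1)_H-i(x_2,y_2)_H$; $S^{\perp_s}=\{a:[a,b]=0\ \forall b\in S\}$. $A_T=\{(x,Tx):x\in\mathbb{K}\}$, $Q=\{(x,0):x\in\mathbb{K}^\perp\}$, $Q_*=\{(0,x):x\in\mathbb{K}_*^\perp\}$. For an isotropic closed subspace $A\subseteq\mathbb{H}$ (i.e. $[a,b]=0$ for $a,b\in A$), a boundary quadruple for $A^{\perp_s}$ is $(H_+,H_-,\Gamma_+,\Gamma_-)$ where $H_\pm$ are Hilbert spaces and $\Gamma_\pm:A^{\perp_s}\to H_\pm$ are linear maps such that $(\Gamma_+,\Gamma_-):A^{\perp_s}\to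 H_+\oplus_\perp H_-$ is bounded, surjective, has kernel exactly $A$, and the abstract Green formula $[a,b]=i(\Gamma_+a,\Gamma_+b)_{H_+}-i(\Gamma_-a,\Gamma_-b)_{H_-}$ holds for all $a,b\in A^{\perp_s}$ (equivalently, $(\Gamma_+,\Gamma_-)$ induces a symplectic topological isomorphism of $A^{\perp_s}/A$ onto $H_+\oplus_\perp H_-$ with the standard structure $i(\cdot,\cdot)_{H_+}-i(\cdot,\cdot)_{H_-}$). *)

From mathcomp Require Import all_boot all_algebra.
From mathcomp Require Import reals complex.
Set Implicit Arguments. Unset Strict Implicit. Unset Printing Implicit Defensive.
Import GRing.Theory Num.Theory.
Local Open Scope ring_scope.
Local Open Scope complex_scope.

Section Hilbert.
Variables (R : realType) (V : lmodType R[i]) (inner : V -> V -> R[i]).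

Definition norm2 (x : V) : R := complex.Re (inner x x).

Definition is_inner_product : Prop :=
  [/\ (forall (a : R[i]) (x y z : V), inner (a *: x + y) z = a * inner x z + inner y z),
      (forall x y : V, inner x y = (inner y x)^*),
      (forall x : V, 0 <= inner x x) &
      (forall x : V, inner x x = 0 -> x = 0)].

Definition cauchy_seq (u : nat -> V) : Prop :=
  forall e : R, 0 < e -> exists N : nat,
    forall m n : nat, (N <= m)%N -> (N <= n)%N -> norm2 (u m - u n) < e.

Definition seq_converges_to (u : nat -> V) (l : V) : Prop :=
  forall e : R, 0 < e -> exists N : nat, forall n : nat, (N <= n)%N -> norm2 (u n - l) < e.

Definition complete : Prop :=
  forall u : nat -> V, cauchy_seq u -> exists l : V, seq_converges_to u l.

Definition separable : Prop :=
  exists d : nat -> V, forall (x : V) (e : R), 0 < e -> exists n : nat, norm2 (x - d n) < e.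

Definition infinite_dimensional : Prop :=
  forall n : nat, exists u : nat -> V,
    forall c : nat -> R[i], \sum_(k < n) c k *: u k = 0 -> forall k : nat, (k < n)%N -> c k = 0.

Definition is_inf_dim_sep_hilbert : Prop :=
  [/\ is_inner_product, complete, separable & infinite_dimensional].

Definition is_linear_op (T : V -> V) : Prop :=
  forall (a : R[i]) (x y : V), T (a *: x + y) = a *: T x + T y.

Definition is_contraction (T : V -> V) : Prop :=
  is_linear_op T /\ forall x : V, norm2 (T x) <= norm2 x.

Definition is_adjoint (T Tstar : V -> V) : Prop :=
  forall x y : V, inner (T x) y = inner x (Tstar y).

Definition closed_subspace (M : V -> Prop) : Prop :=
  [/\ M 0,
      (forall (a : R[i]) (x y : V), M x -> M y -> M (a *: x + y)) &
      (forall (u : nat -> V) (l : V), (forall n, M (u n)) -> seq_converges_to u l -> M l)].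

Definition unitary_on (T : V -> V) (M : V -> Prop) : Prop :=
  [/\ (forall x, M x -> M (T x)),
      (forall x, M x -> norm2 (T x) = norm2 x) &
      (forall y, M y -> exists2 x, M x & T x = y)].

Definition cnu_contraction (T : V -> V) : Prop :=
  is_contraction T /\
  forall M : V -> Prop, closed_subspace M -> unitary_on T M -> forall x, M x -> x = 0.

Definition orth (S : V -> Prop) : V -> Prop :=
  fun x => forall y, S y -> inner x y = 0.

Definition defect_K (T Tstar : V -> V) : V -> Prop := fun x => x - Tstar (T x) = 0.
Definition defect_Kstar (T Tstar : V -> V) : V -> Prop := fun x => x - T (Tstar x) = 0.

Definition sympl (a b : V * V) : R[i] :=
  'i * inner a.1 b.1 - 'i * inner a.2 b.2.

Definition sympl_orth (S : V * V -> Prop) : V * V -> Prop :=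
  fun a => forall b, S b -> sympl a b = 0.

Definition norm2_pair (a : V * V) : R := norm2 a.1 + norm2 a.2.

Definition A_T (T Tstar : V -> V) : V * V -> Prop :=
  fun a => exists2 x, defect_K T Tstar x & a = (x, T x).

(* Boundary quadruple (Hp, Hm, Gp, Gm) for A^{perp_s}, where Hp, Hm are closed
   subspaces of H carrying the inner product of H. *)
Definition boundary_quadruple (A : V * V -> Prop) (Hp Hm : V -> Prop)
    (Gp Gm : V * V -> V) : Prop :=
  (forall a, sympl_orth A a -> Hp (Gp a) /\ Hm (Gm a)) /\
  [/\ 
      (forall (c : R[i]) (a b : V * V), sympl_orth A a -> sympl_orth A b ->
         Gp (c *: a.1 + b.1, c *: a.2 + b.2) = c *: Gp a + Gp b /\
         Gm (c *: a.1 + b.1, c *: a.2 + b.2) = c *: Gm a + Gm b),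
      (exists C : R, forall a, sympl_orth A a ->
         norm2 (Gp a) + norm2 (Gm a) <= C * norm2_pair a),
      (forall u v, Hp u -> Hm v -> exists a, [/\ sympl_orth A a, Gp a = u & Gm a = v]),
      (forall a, (sympl_orth A a /\ Gp a = 0 /\ Gm a = 0) <-> A a) &
      (forall a b, sympl_orth A a -> sympl_orth A b ->
         sympl a b = 'i * inner (Gp a) (Gp b) - 'i * inner (Gm a) (Gm b))].

End Hilbert.

(* Membership in A_T^{perp_s} means (a1, k) = (a2, Tk) for every k in K.  K and K_* are
   the kernels of the self-adjoint maps I - T^*T and I - TT^*, hence the orthogonal
   complements of their ranges, so they are closed without any boundedness of T.  Given
   a in A_T^{perp_s}, let y be the orthogonal projection of a2 onto K_*; then x0 = T^*y
   lies in K with Tx0 = y, a2 - y is orthogonal to K_*, and a1 - x0 is orthogonal to K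
   because (T^*y, k) = (y, Tk) and T maps K into K_*.  As K meets its orthogonal only in
   0, the decomposition is unique, which yields linearity, surjectivity and the kernel
   of (Gamma_+, Gamma_-); the Green formula reduces to (Tx, Tx') = (x, x') on K.
   Completeness enters only through the projection theorem (a minimising sequence is
   Cauchy by the parallelogram law). *)

From mathcomp Require Import all_boot all_order all_algebra.
From mathcomp Require Import reals complex classical_sets boolp.
From mathcomp Require Import ring lra.
Import Order.TTheory GRing.Theory Num.Theory.
Local Open Scope ring_scope.
Local Open Scope complex_scope.

Set Implicit Arguments.
Unset Strict Implicit.

Section Vanishing.
Variable R : realType.

Definition vanishing (r : nat -> R) : Prop :=
  forall e, 0 < e -> exists N, forall n, (N <= n)%N -> r n < e.

Lemma vanishing_inv : vanishing (fun n => n.+1%:R^-1).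
Proof.
move=> e /ltr_add_invr [N]; rewrite add0r => hN; exists N => n le_Nn.
by apply: le_lt_trans hN; rewrite lef_pV2 ?posrE ?ltr0Sn // ler_nat ltnS.
Qed.

Lemma vanishingD (r s : nat -> R) :
  vanishing r -> vanishing s -> vanishing (fun n => r n + s n).
Proof.
move=> hr hs e e0; have e20 : 0 < e / 2 by rewrite divr_gt0.
have [N1 h1] := hr _ e20; have [N2 h2] := hs _ e20.
exists (maxn N1 N2) => n; rewrite geq_max => /andP[n1 n2].
by have := h1 n n1; have := h2 n n2; lra.
Qed.

Lemma le0_vanishing (x : R) (r : nat -> R) :
  vanishing r -> (forall n, x <= r n) -> x <= 0.
Proof.
move=> hr hx; rewrite leNgt; apply/negP => /hr [N /(_ N (leqnn N))].
by rewrite ltNge hx.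
Qed.

Lemma eq0_quadratic_bound (r W : R) :
  (forall t, 2 * t * r <= t ^+ 2 * W) -> r = 0.
Proof.
move=> h; pose c := `|W| + 1; pose s := r / c.
have c0 : 0 < c by rewrite /c ltr_pwDr.
have rE : r = s * c by rewrite /s divfK ?gt_eqF.
have hW : W <= `|W| := ler_norm W.
have hW0 : 0 <= `|W| := normr_ge0 W.
have := h s; rewrite {1}rE => hs.
have k : 0 <= s ^+ 2 * (2 * c - W - 2) by rewrite mulr_ge0 ?sqr_ge0 // /c; lra.
have s0 : s ^+ 2 <= 0 by nra.
have {}s0 : s = 0 by apply/eqP; rewrite -sqrf_eq0 eq_le s0 sqr_ge0.
by rewrite rE s0 mul0r.
Qed.

Lemma vanishing_quadratic_eq0 (r W : R) (rho : nat -> R) :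
  vanishing rho -> (forall t n, 2 * t * r <= t ^+ 2 * W + rho n) -> r = 0.
Proof.
move=> hrho h; apply: (eq0_quadratic_bound (W := W)) => t.
suff : 2 * t * r - t ^+ 2 * W <= 0 by lra.
by apply: (le0_vanishing hrho) => n; have := h t n; lra.
Qed.

End Vanishing.

Section InnerProduct.
Variables (R : realType) (V : lmodType R[i]) (inner : V -> V -> R[i]).
Hypothesis ip : is_inner_product inner.
Local Notation n2 := (norm2 inner).
Local Notation Re := complex.Re.

Lemma inner_linear a x y z : inner (a *: x + y) z = a * inner x z + inner y z.
Proof. by case: ip => h *; apply: h. Qed.

Lemma inner_conj x y : inner x y = conjc (inner y x).
Proof. by case: ip => _ h *; apply: h. Qed.

Lemma inner_eq0 x : inner x x = 0 -> x = 0.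
Proof. by case: ip => _ _ _; apply. Qed.

Lemma inner0l z : inner 0 z = 0.
Proof.
have := inner_linear 1 0 0 z; rewrite scaler0 addr0 mul1r.
by move=> /(congr1 (fun t => t - inner 0 z)); rewrite subrr addrK.
Qed.

Lemma innerDl x y z : inner (x + y) z = inner x z + inner y z.
Proof. by rewrite -[x in LHS]scale1r inner_linear mul1r. Qed.

Lemma innerZl a x z : inner (a *: x) z = a * inner x z.
Proof. by rewrite -[_ *: _]addr0 inner_linear inner0l addr0. Qed.

Lemma innerNl x z : inner (- x) z = - inner x z.
Proof. by rewrite -scaleN1r innerZl mulN1r. Qed.

Lemma innerBl x y z : inner (x - y) z = inner x z - inner y z.
Proof. by rewrite innerDl innerNl. Qed.

Lemma innerDr x y z : inner z (x + y) = inner z x + inner z y.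
Proof. by rewrite inner_conj innerDl rmorphD /= -!inner_conj. Qed.

Lemma innerZr a x z : inner z (a *: x) = conjc a * inner z x.
Proof. by rewrite inner_conj innerZl rmorphM /= -inner_conj. Qed.

Lemma innerNr x z : inner z (- x) = - inner z x.
Proof. by rewrite inner_conj innerNl rmorphN /= -inner_conj. Qed.

Lemma innerBr x y z : inner z (x - y) = inner z x - inner z y.
Proof. by rewrite innerDr innerNr. Qed.

Lemma inner_self x : inner x x = (n2 x)%:C.
Proof.
case: ip => _ _ /(_ x) /ger0_Im + _; rewrite /norm2.
by case: (inner x x) => a b /= ->.
Qed.

Lemma norm2_ge0 x : 0 <= n2 x.
Proof. by case: ip => _ _ /(_ x); rewrite inner_self lecR. Qed.

Lemma Re_inner_conj x y : Re (inner y x) = Re (inner x y).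
Proof. by rewrite [inner y x]inner_conj; case: (inner x y). Qed.

Lemma norm2D x y : n2 (x + y) = n2 x + n2 y + 2 * Re (inner x y).
Proof.
rewrite /norm2 innerDl !innerDr !raddfD /= Re_inner_conj; lra.
Qed.

Lemma norm2N x : n2 (- x) = n2 x.
Proof. by rewrite /norm2 innerNl innerNr opprK. Qed.

Lemma norm2B x y : n2 (x - y) = n2 x + n2 y - 2 * Re (inner x y).
Proof. by rewrite norm2D norm2N innerNr raddfN /= mulrN. Qed.

Lemma norm2_parallelogram x y : n2 (x + y) + n2 (x - y) = 2 * n2 x + 2 * n2 y.
Proof. rewrite norm2D norm2B; lra. Qed.

Lemma norm2Zr (t : R) x : n2 (t%:C *: x) = t ^+ 2 * n2 x.
Proof.
by rewrite /norm2 innerZl innerZr conjc_real inner_self -!rmorphM /= mulrA -expr2.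
Qed.

Lemma norm2_subZr (t : R) x w :
  n2 (x - t%:C *: w) = n2 x - 2 * t * Re (inner x w) + t ^+ 2 * n2 w.
Proof.
rewrite norm2B norm2Zr innerZr conjc_real; case: (inner x w) => a b /=; lra.
Qed.

Lemma Re_inner_le (t : R) x w : 2 * t * Re (inner x w) <= n2 x + t ^+ 2 * n2 w.
Proof. by have := norm2_ge0 (x - t%:C *: w); rewrite norm2_subZr; lra. Qed.

Lemma inner_eq0_Re x w :
  Re (inner x w) = 0 -> Re (inner x ('i *: w)) = 0 -> inner x w = 0.
Proof. by rewrite innerZr; case: (inner x w) => a b /= -> h; congr Complex; lra. Qed.

Lemma closed_subspace0 (P : V -> Prop) : closed_subspace inner P -> P 0.
Proof. by case. Qed.

Lemma closed_subspace_lincomb (P : V -> Prop) c x y :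
  closed_subspace inner P -> P x -> P y -> P (c *: x + y).
Proof. by case=> _ + _; apply. Qed.

Lemma inner_lim_eq0 (u : nat -> V) l v :
  (forall n, inner (u n) v = 0) -> seq_converges_to inner u l -> inner l v = 0.
Proof.
move=> hu hl.
have Re0 w : (forall n, inner (u n) w = 0) -> Re (inner l w) = 0.
  move=> hw; apply: (vanishing_quadratic_eq0 (W := n2 w)
    (rho := fun n => n2 (u n - l))) => // t n.
  by have := Re_inner_le t (l - u n) w; rewrite innerBl hw subr0 -norm2N opprB; lra.
by apply: inner_eq0_Re; apply: Re0 => n; rewrite ?innerZr hu ?mulr0.
Qed.

Lemma orth_closed_subspace (P : V -> Prop) : closed_subspace inner (orth inner P).
Proof.
split=> [y _ | c x y hx hy z Pz | u l hu hl z Pz]; first exact: inner0l.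
  by rewrite inner_linear hx ?hy ?mulr0 ?addr0.
by apply: inner_lim_eq0 hl => n; apply: hu.
Qed.

Lemma orth_inner_sym (P : V -> Prop) p x : orth inner P p -> P x -> inner x p = 0.
Proof. by move=> hp Px; rewrite inner_conj hp // conjc0. Qed.

Lemma norm2D_orth x y : inner x y = 0 -> n2 (x + y) = n2 x + n2 y.
Proof. by move=> xy; rewrite norm2D xy mulr0 addr0. Qed.

Lemma orth_direct_unique (P : V -> Prop) x y p q : closed_subspace inner P ->
  P x -> P y -> orth inner P p -> orth inner P q -> x + p = y + q -> x = y.
Proof.
case=> _ Plin _ Px Py hp hq e; apply/subr0_eq/inner_eq0.
have Pxy : P (x - y) by rewrite addrC -scaleN1r; apply: Plin.
have xyE : x - y = q - p by apply/eqP; rewrite subr_eq addrAC eq_sym subr_eq addrC e.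
by rewrite {1}xyE innerBl hq // hp // subrr.
Qed.

Lemma kernel_selfadjoint (S : V -> V) : (forall x y, inner (S x) y = inner x (S y)) ->
  (fun x => S x = 0) = orth inner (fun v => exists w, v = S w).
Proof.
move=> Ssym; apply/funext => x; apply/propext; split=> [Sx0 _ [w ->] | hx].
  by rewrite -Ssym Sx0 inner0l.
by apply: inner_eq0; rewrite Ssym; apply: hx; exists (S x).
Qed.

End InnerProduct.

Section Projection.
Variables (R : realType) (V : lmodType R[i]) (inner : V -> V -> R[i]).
Hypotheses (ip : is_inner_product inner) (compl : complete inner).
Variable M : V -> Prop.
Hypothesis closedM : closed_subspace inner M.
Variable a : V.
Local Notation n2 := (norm2 inner).
Local Notation Re := complex.Re.

Let M0 : M 0 := closed_subspace0 closedM.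
Let Mlin c x y : M x -> M y -> M (c *: x + y) := closed_subspace_lincomb c closedM.

Let dists : set R := [set n2 (a - y) | y in M].
Let dist2 := inf dists.

Let dists_lbound : has_lbound dists.
Proof. by exists 0 => _ [y _ <-]; apply: norm2_ge0. Qed.

Lemma dist2_le y : M y -> dist2 <= n2 (a - y).
Proof. by move=> My; apply: ge_inf dists_lbound _ _; exists y. Qed.

Lemma dist2_approx n : exists y, M y /\ n2 (a - y) < dist2 + n.+1%:R^-1.
Proof.
have dists_inf : has_inf dists by split=> //; exists (n2 (a - 0)), 0.
have n0 : 0 < n.+1%:R^-1 :> R by rewrite invr_gt0 ltr0Sn.
by have [_ [y My <-]] := inf_adherent n0 dists_inf; exists y.
Qed.

Lemma midpoint_bound y z : M y -> M z ->
  n2 (y - z) <= 2 * (n2 (a - y) - dist2) + 2 * (n2 (a - z) - dist2).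
Proof.
move=> My Mz; pose m := (2^-1 : R)%:C *: (y + z).
have Myz : M (y + z) by rewrite -[y]scale1r; apply: Mlin.
have Mm : M m by rewrite /m -[_ *: _]addr0; apply: Mlin.
have := norm2_parallelogram ip (a - y) (a - z).
have -> : (a - y) + (a - z) = (2 : R)%:C *: (a - m).
  rewrite /m scalerBr scalerA -rmorphM /= mulfV ?pnatr_eq0 // scale1r.
  by rewrite rmorph_nat scaler_nat mulr2n opprD addrACA.
have -> : (a - y) - (a - z) = - (y - z) by rewrite !opprB addrC addrA subrK.
rewrite norm2Zr // norm2N //; have := dist2_le Mm; lra.
Qed.

Lemma minimizing_limit_orth (ys : nat -> V) y :
  (forall n, M (ys n)) -> (forall n, n2 (a - ys n) < dist2 + n.+1%:R^-1) ->
  seq_converges_to inner ys y -> orth inner M (a - y).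
Proof.
move=> Mys hys ys_y.
have Re0 w : M w -> Re (inner (a - y) w) = 0.
  move=> Mw; apply: (vanishing_quadratic_eq0 (W := 2 * n2 w)
    (rho := fun n => n.+1%:R^-1 + n2 (ys n - y))) => [|t n].
    by apply: vanishingD; [apply: vanishing_inv | apply: ys_y].
  have Re_split : Re (inner (a - y) w)
      = Re (inner (a - ys n) w) + Re (inner (ys n - y) w).
    by rewrite -raddfD -innerDl // addrA subrK.
  have := dist2_le (Mlin t%:C Mw (Mys n)).
  rewrite opprD addrA addrAC norm2_subZr // Re_split.
  have := Re_inner_le ip t (ys n - y) w; have := hys n.
  move: (n.+1%:R^-1) dist2 => e d; lra.
move=> w Mw; apply: inner_eq0_Re => //; apply: Re0 => //.
by rewrite -[_ *: w]addr0; apply: Mlin.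
Qed.

Lemma orthogonal_projection : exists y, M y /\ orth inner M (a - y).
Proof.
have [ys hys] := choice dist2_approx.
have ys_cauchy : cauchy_seq inner ys.
  move=> e e0; have [N hN] : exists N, forall n, (N <= n)%N -> n.+1%:R^-1 < e / 4.
    by apply: vanishing_inv; lra.
  exists N => m n hm hn; have := midpoint_bound (hys m).1 (hys n).1.
  have := (hys m).2; have := (hys n).2; have := hN m hm; have := hN n hn.
  move: (m.+1%:R^-1) (n.+1%:R^-1) dist2 => em en d; lra.
have [y ys_y] := compl ys_cauchy.
exists y; split.
  by case: closedM => _ _ Mlim; apply: (Mlim ys) ys_y => n; case: (hys n).
by apply: (minimizing_limit_orth _ _ ys_y) => n; case: (hys n).
Qed.

End Projection.

Section DefectSpaces.
Variables (R : realType) (V : lmodType R[i]) (inner : V -> V -> R[i]).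
Hypothesis ip : is_inner_product inner.
Variables T Tstar : V -> V.
Hypothesis adj : is_adjoint inner T Tstar.
Local Notation K := (defect_K T Tstar).
Local Notation Kstar := (defect_Kstar T Tstar).

Lemma adjointC x y : inner (Tstar x) y = inner x (T y).
Proof. by rewrite inner_conj // -adj -inner_conj. Qed.

Lemma defect_K_closed : closed_subspace inner K.
Proof.
rewrite /defect_K (kernel_selfadjoint ip) => [|x y]; first exact: orth_closed_subspace.
by rewrite !(innerBl ip, innerBr ip) adjointC adj.
Qed.

Lemma defect_Kstar_closed : closed_subspace inner Kstar.
Proof.
rewrite /defect_Kstar (kernel_selfadjoint ip) => [|x y]; first exact: orth_closed_subspace.
by rewrite !(innerBl ip, innerBr ip) adj adjointC.
Qed.

Lemma defect_K_TstarT x : K x -> Tstar (T x) = x.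
Proof. by move/subr0_eq. Qed.

Lemma defect_Kstar_TTstar y : Kstar y -> T (Tstar y) = y.
Proof. by move/subr0_eq. Qed.

Lemma defect_K_T x : K x -> Kstar (T x).
Proof. by move=> Kx; rewrite /defect_Kstar defect_K_TstarT // subrr. Qed.

Lemma defect_Kstar_Tstar y : Kstar y -> K (Tstar y).
Proof. by move=> Ksy; rewrite /defect_K defect_Kstar_TTstar // subrr. Qed.

End DefectSpaces.

Section BoundaryQuadruple.
Variables (R : realType) (V : lmodType R[i]) (inner : V -> V -> R[i]).
Hypothesis ip : is_inner_product inner.
Variables T Tstar : V -> V.
Hypotheses (Tlin : is_linear_op T) (adj : is_adjoint inner T Tstar).
Local Notation K := (defect_K T Tstar).
Local Notation Kstar := (defect_Kstar T Tstar).
Local Notation A := (A_T T Tstar).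

Lemma sympl_orth_AP a :
  sympl_orth inner A a <-> forall k, K k -> inner a.1 k = inner a.2 (T k).
Proof.
split=> [aA k Kk | aA _ [k Kk ->]]; last by rewrite /sympl aA // subrr.
have /eqP := aA (k, T k) (ex_intro2 _ _ k Kk erefl).
have i0 : 'i != 0 :> R[i] by rewrite eq_complex /= oner_eq0 andbF.
by rewrite /sympl -mulrBr mulf_eq0 (negbTE i0) subr_eq0 => /eqP.
Qed.

Lemma sympl_orth_A_decomp x p m :
  K x -> orth inner K p -> orth inner Kstar m -> sympl_orth inner A (x + p, T x + m).
Proof.
move=> Kx hp hm; apply/sympl_orth_AP => k Kk /=.
rewrite !(innerDl ip) hp // hm; last exact: defect_K_T.
by rewrite (adj x) (defect_K_TstarT Kk).
Qed.

Definition AT_decomposition (Gp Gm : V * V -> V) : Prop :=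
  forall a, sympl_orth inner A a ->
    [/\ orth inner K (Gp a), orth inner Kstar (Gm a) &
        exists2 x0, K x0 & a = (x0 + Gp a, T x0 + Gm a)].

Lemma AT_decomposition_exists : complete inner -> exists Gp Gm, AT_decomposition Gp Gm.
Proof.
move=> compl.
have [P hP] := choice (orthogonal_projection ip compl (defect_Kstar_closed ip adj)).
exists (fun a => a.1 - Tstar (P a.2)), (fun a => a.2 - P a.2) => -[a1 a2] /sympl_orth_AP aA.
have [Ky hy] := hP a2; split=> //=.
  move=> k Kk; rewrite (innerBl ip) aA // (adjointC ip adj) -(innerBl ip).
  exact/hy/defect_K_T.
exists (Tstar (P a2)); first exact: defect_Kstar_Tstar.
by rewrite /= (defect_Kstar_TTstar Ky) !subrKC.
Qed.

Section Decomposition.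
Variables Gp Gm : V * V -> V.
Hypothesis dec : AT_decomposition Gp Gm.

Lemma AT_decompositionP a : sympl_orth inner A a ->
  [/\ orth inner K (Gp a), orth inner Kstar (Gm a) &
      exists2 x, K x & a.1 = x + Gp a /\ a.2 = T x + Gm a].
Proof. by move/dec=> [hp hm [x Kx ea]]; split=> //; exists x => //; split; rewrite {1}ea. Qed.

Lemma AT_decomposition_eval x p m : K x -> orth inner K p -> orth inner Kstar m ->
  Gp (x + p, T x + m) = p /\ Gm (x + p, T x + m) = m.
Proof.
move=> Kx hp hm; have [hp' _ [y Ky [e1 e2]]] := dec (sympl_orth_A_decomp Kx hp hm).
have xy := orth_direct_unique ip (defect_K_closed ip adj) Kx Ky hp hp' e1.
by rewrite -xy in e1 e2; split; apply/esym; [apply: addrI e1 | apply: addrI e2].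
Qed.

Lemma AT_decomposition_linear c a b : sympl_orth inner A a -> sympl_orth inner A b ->
  Gp (c *: a.1 + b.1, c *: a.2 + b.2) = c *: Gp a + Gp b /\
  Gm (c *: a.1 + b.1, c *: a.2 + b.2) = c *: Gm a + Gm b.
Proof.
move=> /AT_decompositionP[hpa hma [xa Kxa [-> ->]]].
move=> /AT_decompositionP[hpb hmb [xb Kxb [-> ->]]].
rewrite !scalerDr (addrACA (c *: xa)) (addrACA (c *: T xa)) -(Tlin c xa xb).
apply: AT_decomposition_eval; first exact: closed_subspace_lincomb (defect_K_closed ip adj) _ _.
  exact: closed_subspace_lincomb (orth_closed_subspace ip _) _ _.
exact: closed_subspace_lincomb (orth_closed_subspace ip _) _ _.
Qed.

Lemma AT_decomposition_bounded a : sympl_orth inner A a ->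
  norm2 inner (Gp a) + norm2 inner (Gm a) <= norm2_pair inner a.
Proof.
move=> /AT_decompositionP[hp hm [x Kx [ea1 ea2]]].
have xp := orth_inner_sym ip hp Kx; have Txm := orth_inner_sym ip hm (defect_K_T Kx).
rewrite /norm2_pair ea1 ea2 !(norm2D_orth ip) //.
by have := norm2_ge0 ip x; have := norm2_ge0 ip (T x); lra.
Qed.

Lemma AT_decomposition_surjective u v : orth inner K u -> orth inner Kstar v ->
  exists a, [/\ sympl_orth inner A a, Gp a = u & Gm a = v].
Proof.
move=> hu hv; exists (0 + u, T 0 + v).
have K0 : K 0 := closed_subspace0 (defect_K_closed ip adj).
have [-> ->] := AT_decomposition_eval K0 hu hv.
by split=> //; apply: sympl_orth_A_decomp.
Qed.

Lemma AT_decomposition_kernel a :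
  (sympl_orth inner A a /\ Gp a = 0 /\ Gm a = 0) <-> A a.
Proof.
split=> [[aA [Gp0 Gm0]] | [x Kx ->]].
  have [_ _ [x Kx [ea1 ea2]]] := AT_decompositionP aA.
  by exists x => //; rewrite [a]surjective_pairing ea1 ea2 Gp0 Gm0 !addr0.
have Oorth P : orth inner P 0 := closed_subspace0 (orth_closed_subspace ip P).
have := sympl_orth_A_decomp Kx (Oorth K) (Oorth Kstar).
have := AT_decomposition_eval Kx (Oorth K) (Oorth Kstar).
by rewrite !addr0 => -[-> ->].
Qed.

Lemma AT_decomposition_green a b : sympl_orth inner A a -> sympl_orth inner A b ->
  sympl inner a b = 'i * inner (Gp a) (Gp b) - 'i * inner (Gm a) (Gm b).
Proof.
move=> /AT_decompositionP[hpa hma [xa Kxa [ea1 ea2]]].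
move=> /AT_decompositionP[hpb hmb [xb Kxb [eb1 eb2]]].
rewrite /sympl ea1 ea2 eb1 eb2 !(innerDl ip, innerDr ip).
rewrite (orth_inner_sym ip hpb Kxa) (hpa _ Kxb) (orth_inner_sym ip hmb (defect_K_T Kxa)).
rewrite (hma _ (defect_K_T Kxb)) (adj xa) (defect_K_TstarT Kxb).
by ring.
Qed.

Lemma AT_decomposition_boundary_quadruple :
  boundary_quadruple inner A (orth inner K) (orth inner Kstar) Gp Gm.
Proof.
split; first by move=> a /AT_decompositionP[].
split.
- exact: AT_decomposition_linear.
- by exists 1 => a /AT_decomposition_bounded; rewrite mul1r.
- exact: AT_decomposition_surjective.
- exact: AT_decomposition_kernel.
- exact: AT_decomposition_green.
Qed.

End Decomposition.

End BoundaryQuadruple.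

Theorem lemma4p3 (R : realType) (V : lmodType R[i]) (inner : V -> V -> R[i])
    (T Tstar : V -> V) :
  is_inf_dim_sep_hilbert inner ->
  cnu_contraction inner T ->
  is_adjoint inner T Tstar ->
  let K := defect_K T Tstar in
  let Kstar := defect_Kstar T Tstar in
  let A := A_T T Tstar in
  let decomp (Gp Gm : V * V -> V) :=
    forall a, sympl_orth inner A a ->
      [/\ orth inner K (Gp a), orth inner Kstar (Gm a) &
          exists2 x0, K x0 & a = (x0 + Gp a, T x0 + Gm a)] in
  (exists Gp Gm, decomp Gp Gm) /\
  (forall Gp Gm, decomp Gp Gm ->
     boundary_quadruple inner A (orth inner K) (orth inner Kstar) Gp Gm).
Proof.
move=> [ip compl _ _] [[Tlin _] _] adj K Kstar A decomp; split.
  exact: AT_decomposition_exists.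
by move=> Gp Gm; apply: AT_decomposition_boundary_quadruple.
Qed.
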